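(* Let $P=\{S_1,\ldots,S_n\}$ be a homothetic packing of $n$ squares with contact graph $G=([n],E)$. Then every clique of $G$ has at most $4$ vertices, and for every clique $\{i,j,k,\ell\}$ of size $4$ the squares $S_i,S_j,S_k,S_\ell$ share a corner.
   Context: Let $S=\{(x,y): -1\le x,y\le 1\}$. A homothetic packing of $n$ squares is a set $P=\{S_1,\ldots,S_n\}$ with $S_i=r_iS+p_i$, $r_i>0$, $p_i\in\mathbb{R}^2$, such that distinct squares have disjoint interiors. Its contact graph is $G=([n],E)$ where $\{i,j\}\in E$ iff $i\ne j$ and $S_i\cap S_j\ne\emptyset$. Four squares of the packing share a corner if they have a common point $z$ which is a corner (vertex) of each of the four squares (equivalently, they all meet at a single common point, each occupying one of the four quadrants around it). *)

From Stdlib Require Import Reals List.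
Open Scope R_scope.

(* A square r*S + p with S = [-1,1]^2, given by center p = (cx,cy) and r = rad. *)
Record square := mkSquare { cx : R; cy : R; rad : R }.

Definition in_sq (S : square) (z : R * R) : Prop :=
  Rabs (fst z - cx S) <= rad S /\ Rabs (snd z - cy S) <= rad S.

Definition in_int (S : square) (z : R * R) : Prop :=
  Rabs (fst z - cx S) < rad S /\ Rabs (snd z - cy S) < rad S.

Definition is_corner (S : square) (z : R * R) : Prop :=
  Rabs (fst z - cx S) = rad S /\ Rabs (snd z - cy S) = rad S.

Definition homothetic_packing (n : nat) (P : nat -> square) : Prop :=
  (forall i, (i < n)%nat -> 0 < rad (P i)) /\
  (forall i j, (i < n)%nat -> (j < n)%nat -> i <> j ->
     ~ (exists z, in_int (P i) z /\ in_int (P j) z)).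

Definition contact_edge (P : nat -> square) (i j : nat) : Prop :=
  i <> j /\ exists z, in_sq (P i) z /\ in_sq (P j) z.

Definition is_clique (n : nat) (P : nat -> square) (C : list nat) : Prop :=
  NoDup C /\ (forall i, In i C -> (i < n)%nat) /\
  (forall i j, In i C -> In j C -> i <> j -> contact_edge P i j).

Definition share_corner (P : nat -> square) (C : list nat) : Prop :=
  exists z, forall i, In i C -> is_corner (P i) z.

(* Pairwise touching axis-parallel squares have a common point z (Helly's theorem in
   dimension one, applied to each coordinate).  At z every square containing z
   reaches into at least one of the four open quadrants around z, and two squares
   reaching into the same quadrant overlap in their interiors.  In a packing the
   squares of a clique therefore reach into pairwise different quadrants, so there
   are at most four of them; if there are four, every quadrant is taken, and a
   square not having z as a corner would reach into two quadrants, one of which is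
   taken by another square. *)

From Pilot Require Import Defs.
From Stdlib Require Import Reals List Lra.
Open Scope R_scope.

Lemma Rabs_le_between (u r : R) : Rabs u <= r <-> -r <= u <= r.
Proof. unfold Rabs; destruct (Rcase_abs u); split; intros; lra. Qed.

Lemma Rabs_lt_between (u r : R) : Rabs u < r <-> -r < u < r.
Proof. unfold Rabs; destruct (Rcase_abs u); split; intros; lra. Qed.

Lemma Rabs_lt_of_le_neq (u r : R) : Rabs u <= r -> Rabs u <> r -> -r < u < r.
Proof. intros [Hlt|Heq] Hne; [now apply Rabs_lt_between|contradiction]. Qed.

Lemma in_sq_iff (S : square) (z : R * R) :
  in_sq S z <->
  cx S - rad S <= fst z <= cx S + rad S /\ cy S - rad S <= snd z <= cy S + rad S.
Proof. unfold in_sq; rewrite !Rabs_le_between; lra. Qed.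

Lemma in_int_iff (S : square) (z : R * R) :
  Defs.in_int S z <->
  cx S - rad S < fst z < cx S + rad S /\ cy S - rad S < snd z < cy S + rad S.
Proof. unfold Defs.in_int; rewrite !Rabs_lt_between; lra. Qed.

Lemma exists_argmax (f : nat -> R) (h : nat) (t : list nat) :
  exists k, In k (h :: t) /\ forall i, In i (h :: t) -> f i <= f k.
Proof.
  revert h; induction t as [|a t IH]; intros h.
  - exists h; split; [now left|]. intros i [->|[]]; lra.
  - destruct (IH a) as [k [Hk Hmax]].
    destruct (Rle_dec (f h) (f k)).
    + exists k; split; [now right|]. intros i [->|Hi]; [lra|auto].
    + exists h; split; [now left|]. intros i [->|Hi]; [lra|].
      specialize (Hmax i Hi); lra.
Qed.

Lemma intervals_common_point (lo hi : nat -> R) (C : list nat) :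
  (forall i j, In i C -> In j C -> exists x, lo i <= x <= hi i /\ lo j <= x <= hi j) ->
  exists x, forall i, In i C -> lo i <= x <= hi i.
Proof.
  intros Hmeet; destruct C as [|h t].
  - exists 0; intros i [].
  - destruct (exists_argmax lo h t) as [k [Hk Hmax]].
    exists (lo k); intros i Hi.
    destruct (Hmeet k i Hk Hi) as [x Hx].
    specialize (Hmax i Hi); lra.
Qed.

Lemma squares_common_point (P : nat -> square) (C : list nat) :
  (forall i j, In i C -> In j C -> exists z, in_sq (P i) z /\ in_sq (P j) z) ->
  exists z, forall i, In i C -> in_sq (P i) z.
Proof.
  intros Hmeet.
  destruct (intervals_common_point (fun i => cx (P i) - rad (P i))
              (fun i => cx (P i) + rad (P i)) C) as [x Hx].
  { intros i j Hi Hj; destruct (Hmeet i j Hi Hj) as [z [Hzi Hzj]].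
    exists (fst z); rewrite in_sq_iff in Hzi, Hzj; lra. }
  destruct (intervals_common_point (fun i => cy (P i) - rad (P i))
              (fun i => cy (P i) + rad (P i)) C) as [y Hy].
  { intros i j Hi Hj; destruct (Hmeet i j Hi Hj) as [z [Hzi Hzj]].
    exists (snd z); rewrite in_sq_iff in Hzi, Hzj; lra. }
  exists (x, y); intros i Hi; rewrite in_sq_iff; simpl.
  specialize (Hx i Hi); specialize (Hy i Hi); lra.
Qed.

(* [opens_toward s x lo hi]: the interval [lo, hi] contains points arbitrarily close
   to [x] on the side given by [s] ([true] = right, [false] = left). *)
Definition opens_toward (s : bool) (x lo hi : R) : Prop :=
  if s then x < hi else lo < x.

Definition quadrant : Type := bool * bool.

Definition opens_into (S : square) (z : R * R) (q : quadrant) : Prop :=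
  opens_toward (fst q) (fst z) (cx S - rad S) (cx S + rad S) /\
  opens_toward (snd q) (snd z) (cy S - rad S) (cy S + rad S).

Definition open_side (x hi : R) : bool := if Rlt_dec x hi then true else false.

Definition quadrant_at (S : square) (z : R * R) : quadrant :=
  (open_side (fst z) (cx S + rad S), open_side (snd z) (cy S + rad S)).

Lemma opens_toward_open_side (x lo hi : R) :
  lo < hi -> lo <= x <= hi -> opens_toward (open_side x hi) x lo hi.
Proof. unfold opens_toward, open_side; destruct (Rlt_dec x hi); lra. Qed.

Lemma opens_toward_inner (s : bool) (x lo hi : R) :
  lo < x < hi -> opens_toward s x lo hi.
Proof. unfold opens_toward; destruct s; lra. Qed.

Lemma interval_interiors_meet (s : bool) (x lo1 hi1 lo2 hi2 : R) :
  lo1 <= x <= hi1 -> lo2 <= x <= hi2 ->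
  opens_toward s x lo1 hi1 -> opens_toward s x lo2 hi2 ->
  exists y, lo1 < y < hi1 /\ lo2 < y < hi2.
Proof.
  unfold opens_toward; intros H1 H2 H3 H4; destruct s.
  - exists ((x + Rmin hi1 hi2) / 2).
    unfold Rmin; destruct (Rle_dec hi1 hi2); lra.
  - exists ((x + Rmax lo1 lo2) / 2).
    unfold Rmax; destruct (Rle_dec lo1 lo2); lra.
Qed.

Lemma opens_into_quadrant_at (S : square) (z : R * R) :
  0 < rad S -> in_sq S z -> opens_into S z (quadrant_at S z).
Proof.
  intros Hr Hz; rewrite in_sq_iff in Hz.
  split; apply opens_toward_open_side; lra.
Qed.

Lemma corner_or_opens_into_other (S : square) (z : R * R) :
  0 < rad S -> in_sq S z ->
  is_corner S z \/ exists q, q <> quadrant_at S z /\ opens_into S z q.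
Proof.
  intros Hr Hz.
  destruct (opens_into_quadrant_at S z Hr Hz) as [Hox Hoy].
  destruct Hz as [Hzx Hzy].
  destruct (Req_dec (Rabs (fst z - cx S)) (rad S)) as [Ex|Nx];
  [destruct (Req_dec (Rabs (snd z - cy S)) (rad S)) as [Ey|Ny]|].
  - now left.
  - right; exists (fst (quadrant_at S z), negb (snd (quadrant_at S z))); split.
    + destruct (quadrant_at S z) as [a [|]]; discriminate.
    + split; [exact Hox|].
      pose proof (Rabs_lt_of_le_neq _ _ Hzy Ny); apply opens_toward_inner; lra.
  - right; exists (negb (fst (quadrant_at S z)), snd (quadrant_at S z)); split.
    + destruct (quadrant_at S z) as [[|] b]; discriminate.
    + split; [|exact Hoy].
      pose proof (Rabs_lt_of_le_neq _ _ Hzx Nx); apply opens_toward_inner; lra.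
Qed.

Lemma interiors_meet_of_common_quadrant (S1 S2 : square) (z : R * R) (q : quadrant) :
  in_sq S1 z -> in_sq S2 z -> opens_into S1 z q -> opens_into S2 z q ->
  exists w, Defs.in_int S1 w /\ Defs.in_int S2 w.
Proof.
  rewrite !in_sq_iff; intros H1 H2 [Hx1 Hy1] [Hx2 Hy2].
  destruct (interval_interiors_meet (fst q) (fst z) _ _ _ _
              (proj1 H1) (proj1 H2) Hx1 Hx2) as [x Hx].
  destruct (interval_interiors_meet (snd q) (snd z) _ _ _ _
              (proj2 H1) (proj2 H2) Hy1 Hy2) as [y Hy].
  exists (x, y); rewrite !in_int_iff; simpl; lra.
Qed.

Lemma injective_on_pigeonhole {A B : Type} (f : A -> B) (C : list A) (e : list B) :
  (forall y, In y e) -> NoDup C ->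
  (forall i j, In i C -> In j C -> f i = f j -> i = j) ->
  (length C <= length e)%nat /\
  (length C = length e -> forall y, exists i, In i C /\ f i = y).
Proof.
  intros He HC Hinj.
  assert (Himg : NoDup (map f C)) by (apply NoDup_map_NoDup_ForallPairs; assumption).
  assert (Hincl : incl (map f C) e) by (intros y _; apply He).
  rewrite <- (length_map f C); split.
  - exact (NoDup_incl_length Himg Hincl).
  - intros Hlen y.
    assert (Hsurj : incl e (map f C))
      by (apply (NoDup_length_incl Himg); [rewrite Hlen|]; auto).
    destruct (proj1 (in_map_iff f C y) (Hsurj y (He y))) as [i [Hfi Hi]].
    now exists i.
Qed.

Definition all_quadrants : list quadrant :=
  (true, true) :: (true, false) :: (false, true) :: (false, false) :: nil.

Lemma in_all_quadrants (q : quadrant) : In q all_quadrants.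
Proof. destruct q as [[|] [|]]; simpl; tauto. Qed.

Lemma packing_quadrant_unique (n : nat) (P : nat -> square) (i j : nat)
    (z : R * R) (q : quadrant) :
  homothetic_packing n P -> (i < n)%nat -> (j < n)%nat ->
  in_sq (P i) z -> in_sq (P j) z -> opens_into (P i) z q -> opens_into (P j) z q ->
  i = j.
Proof.
  intros [_ Hdisj] Hi Hj Hzi Hzj Hqi Hqj.
  destruct (Nat.eq_dec i j) as [|Hne]; [assumption|exfalso].
  exact (Hdisj i j Hi Hj Hne (interiors_meet_of_common_quadrant _ _ z q Hzi Hzj Hqi Hqj)).
Qed.

Lemma clique_squares_touch (n : nat) (P : nat -> square) (C : list nat) :
  homothetic_packing n P -> is_clique n P C ->
  forall i j, In i C -> In j C -> exists z, in_sq (P i) z /\ in_sq (P j) z.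
Proof.
  intros [Hpos _] [_ [HC Hedge]] i j Hi Hj.
  destruct (Nat.eq_dec i j) as [<-|Hne].
  - exists (cx (P i), cy (P i)).
    assert (0 < rad (P i)) by auto.
    split; apply in_sq_iff; simpl; lra.
  - exact (proj2 (Hedge i j Hi Hj Hne)).
Qed.

Theorem lemma9 (n : nat) (P : nat -> square) :
  homothetic_packing n P ->
  forall C : list nat, is_clique n P C ->
    (length C <= 4)%nat /\ (length C = 4%nat -> share_corner P C).
Proof.
  intros Hpack C Hclique.
  pose proof Hclique as [HnoDup [HC _]].
  pose proof (proj1 Hpack) as Hpos.
  destruct (squares_common_point P C (clique_squares_touch n P C Hpack Hclique))
    as [z Hz].
  set (q := fun i => quadrant_at (P i) z).
  assert (Hq : forall i, In i C -> opens_into (P i) z (q i))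
    by (intros i Hi; apply opens_into_quadrant_at; auto).
  assert (Hunique : forall i j, In i C -> In j C -> q i = q j -> i = j).
  { intros i j Hi Hj Eq.
    apply (packing_quadrant_unique n P i j z (q i)); auto.
    rewrite Eq; auto. }
  destruct (injective_on_pigeonhole q C all_quadrants in_all_quadrants HnoDup Hunique)
    as [Hlen Hsurj].
  split; [exact Hlen|].
  intros H4; exists z; intros i Hi.
  destruct (corner_or_opens_into_other (P i) z (Hpos i (HC i Hi)) (Hz i Hi))
    as [Hcorner|[q' [Hq' Hopen]]]; [exact Hcorner|exfalso].
  destruct (Hsurj H4 q') as [j [Hj <-]].
  assert (j = i) as -> by (apply (packing_quadrant_unique n P j i z (q j)); auto).
  exact (Hq' eq_refl).
Qed.
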